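(* The variety $Z_{Horn}$ is the vanishing locus (in $W$) of the polynomial $s(X)=\det(H\circ X)$, where $\circ$ denotes the Hadamard (entrywise) product.
   Context: $H$ is the Horn matrix \[H=\begin{pmatrix} 1 & -1 &1& 1& -1 \\ -1 & 1& -1 &1& 1\\ 1 & -1 & 1 & -1 & 1\\ 1 & 1& -1&1& -1\\ -1&1&1&-1&1\end{pmatrix}.\] $W$ is the space of $5\times 5$ matrices of the form \[X=\begin{pmatrix} y_{11}& 0&0& y_{41}& y_{51} \\ y_{12} & y_{22}& 0 &0& y_{52}\\ y_{13 }& y_{23}& y_{33} & 0& 0\\ 0 & y_{24}& y_{34}&y_{44}& 0\\ 0&0&y_{35}&y_{45}& y_{55}\end{pmatrix}.\] $Z_{Horn}\subset W$ is the set of all matrices $DB$ where $D$ is a diagonal matrix with positive diagonal entries and \[B = \begin{pmatrix} 1& 0&0& y_4& y_5+1 \\ y_1+1 & 1& 0 &0& y_5\\ y_1 & y_2+1 & 1 & 0& 0\\ 0 & y_2& y_3+1&1& 0\\ 0&0&y_3&y_4+1&1\end{pmatrix}\operatorname{diag}(z_1,\dots,z_5)\] with $y_1,\dots,y_5,z_1,\dots,z_5$ positive reals; it is regarded as a hypersurface (variety) in $W$. *)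

From HB Require Import structures.
From mathcomp Require Import all_boot all_order all_algebra.
From mathcomp Require Import reals.
From mathcomp Require Import mpoly.
Set Implicit Arguments. Unset Strict Implicit. Unset Printing Implicit Defensive.
Import Order.TTheory GRing.Theory Num.Theory.
Local Open Scope ring_scope.

(* Indices 1..5 of the paper are 'I_5 = {0,..,4} here. *)

Definition Horn {R : ringType} : 'M[R]_5 :=
  \matrix_(i < 5, j < 5)
   match nat_of_ord i, nat_of_ord j with
   | 0, 0 => 1 | 0, 1 => -1 | 0, 2 => 1 | 0, 3 => 1 | 0, _ => -1
   | 1, 0 => -1 | 1, 1 => 1 | 1, 2 => -1 | 1, 3 => 1 | 1, _ => 1
   | 2, 0 => 1 | 2, 1 => -1 | 2, 2 => 1 | 2, 3 => -1 | 2, _ => 1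
   | 3, 0 => 1 | 3, 1 => 1 | 3, 2 => -1 | 3, 3 => 1 | 3, _ => -1
   | _, 0 => -1 | _, 1 => 1 | _, 2 => 1 | _, 3 => -1 | _, _ => 1
   end.

(* Zero pattern of W: entry (i,j) is forced to be 0 iff j = i+1 or j = i+2 (mod 5).
   Row 1: cols 2,3; row 2: cols 3,4; row 3: cols 4,5; row 4: cols 5,1; row 5: cols 1,2. *)
Definition W_zero (i j : 'I_5) : bool :=
  ((j + 5 - i) %% 5 == 1)%N || ((j + 5 - i) %% 5 == 2)%N.

Definition inW {R : ringType} (X : 'M[R]_5) : Prop :=
  forall i j : 'I_5, W_zero i j -> X i j = 0.

(* The matrix B(y) (before right multiplication by diag(z)); y k stands for y_{k+1}. *)
Definition B0 {R : ringType} (y : 'I_5 -> R) : 'M[R]_5 :=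
  let y1 := y 0%R in let y2 := y 1%R in let y3 := y 2%R in
  let y4 := y 3%R in let y5 := y 4%R in
  \matrix_(i < 5, j < 5)
   match nat_of_ord i, nat_of_ord j with
   | 0, 0 => 1 | 0, 3 => y4 | 0, 4 => y5 + 1
   | 1, 0 => y1 + 1 | 1, 1 => 1 | 1, 4 => y5
   | 2, 0 => y1 | 2, 1 => y2 + 1 | 2, 2 => 1
   | 3, 1 => y2 | 3, 2 => y3 + 1 | 3, 3 => 1
   | 4, 2 => y3 | 4, 3 => y4 + 1 | 4, 4 => 1
   | _, _ => 0
   end.

Definition diagv {R : ringType} (d : 'I_5 -> R) : 'M[R]_5 := diag_mx (\row_i d i).

Definition Z_Horn {R : realType} (X : 'M[R]_5) : Prop :=
  exists (d y z : 'I_5 -> R),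
    [/\ forall i, 0 < d i, forall i, 0 < y i, forall i, 0 < z i &
        X = diagv d *m B0 y *m diagv z].

Definition hadamard {R : ringType} (A B : 'M[R]_5) : 'M[R]_5 :=
  \matrix_(i, j) (A i j * B i j).

Definition s_Horn {R : comRingType} (X : 'M[R]_5) : R := \det (hadamard Horn X).

(* Polynomial functions on 5x5 matrices: multivariate polynomials in the 25
   entries, evaluated at the vectorized matrix.  Polynomial functions on W are
   exactly restrictions of these. *)
Definition mx_eval {R : comRingType} (p : {mpoly R[5 * 5]}) (X : 'M[R]_5) : R :=
  p.@[fun k => mxvec X 0 k].

Definition zariski_closure_in_W {R : comRingType} (S : 'M[R]_5 -> Prop)
    (X : 'M[R]_5) : Prop :=
  inW X /\ forall p : {mpoly R[5 * 5]},
    (forall Y, S Y -> mx_eval p Y = 0) -> mx_eval p X = 0.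

From HB Require Import structures.
From mathcomp Require Import all_boot all_order all_algebra.
From mathcomp Require Import reals.
From mathcomp Require Import mpoly.
From mathcomp Require Import ring lra.
Set Implicit Arguments. Unset Strict Implicit. Unset Printing Implicit Defensive.
Import Order.TTheory GRing.Theory Num.Theory.
Local Open Scope ring_scope.

(* If [H o X] is singular, a left kernel vector [u] makes every column [j] of
   [X] orthogonal to [(u j, - u (j+1), u (j+2))].  Conversely [D B diag z] has
   left kernel [d^-1], and any [X] in [W] with such a kernel and nonzero
   entries [u j], [X j j] is of the form [D B diag z] with real, possibly
   negative, parameters.  A polynomial restricted to a polynomial curve is a
   polynomial in the curve parameter, so it vanishes at [t = 0] as soon as it
   vanishes for all large [t].  Curves that shift parameters by [t] extend the
   vanishing from positive to arbitrary parameters, then to every [X] whose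
   kernel vector has no three cyclically consecutive zeros (its columns are
   then cross products with the vectors above); the remaining kernels [u] are
   moved along [u + t e], keeping the columns orthogonal. *)

Definition Wmx {R : nzRingType} (c0 c1 c2 : 'I_5 -> R) : 'M[R]_5 :=
  \matrix_(i, j) (if i == j then c0 j else if i == j + 1 then c1 j
                  else if i == j + 2 then c2 j else 0).

Definition horn_col {R : nzRingType} (u c0 c1 c2 : 'I_5 -> R) (j : 'I_5) : R :=
  u j * c0 j - u (j + 1) * c1 j + u (j + 2) * c2 j.

Definition horn_param {R : nzRingType} (d y z : 'I_5 -> R) : 'M[R]_5 :=
  diagv d *m B0 y *m diagv z.

Lemma ord_fun_nat (T : Type) (f : 'I_5 -> T) :
  exists g : nat -> T, forall o, f o = g o.
Proof. by exists (fun k => f (inord k)) => o; rewrite inord_val. Qed.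

(* After [ord_fun_nat], ordinal arithmetic in the arguments of [g] computes. *)
Ltac eval_ord_args g := repeat match goal with |- context [g ?n] =>
  let m := eval vm_compute in n in progress change n with m end.

Lemma I5_addE :
  ((1 + 1 = 2 :> 'I_5)%R * (1 + 2 = 3 :> 'I_5)%R * (2 + 2 = 4 :> 'I_5)%R *
   (3 + 1 = 4 :> 'I_5)%R * (4 + 1 = 0 :> 'I_5)%R * (4 + 2 = 1 :> 'I_5)%R *
   (4 + 4 = 3 :> 'I_5)%R)%type.
Proof. by do !split; apply/val_inj. Qed.

Variant offset_spec (j : 'I_5) : 'I_5 -> Prop :=
  | Offset0 : offset_spec j j
  | Offset1 : offset_spec j (j + 1)
  | Offset2 : offset_spec j (j + 2)
  | Offset3 : offset_spec j (j + 3)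
  | Offset4 : offset_spec j (j + 4).

Lemma offsetP (j i : 'I_5) : offset_spec j i.
Proof.
have -> : i = j + (i - j) by rewrite addrC subrK.
case: (i - j) => [[|[|[|[|[|//]]]]] lt5];
  [rewrite (_ : Ordinal lt5 = 0) ?addr0 | rewrite (_ : Ordinal lt5 = 1)
  | rewrite (_ : Ordinal lt5 = 2) | rewrite (_ : Ordinal lt5 = 3)
  | rewrite (_ : Ordinal lt5 = 4)]; try exact: val_inj; constructor.
Qed.

Section WMatrices.
Variable R : nzRingType.

Lemma eq_Wmx (c0 c1 c2 d0 d1 d2 : 'I_5 -> R) :
  c0 =1 d0 -> c1 =1 d1 -> c2 =1 d2 -> Wmx c0 c1 c2 = Wmx d0 d1 d2.
Proof. by move=> e0 e1 e2; apply/matrixP => i j; rewrite !mxE e0 e1 e2. Qed.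

Lemma inW_WmxE (X : 'M[R]_5) : inW X ->
  X = Wmx (fun j => X j j) (fun j => X (j + 1) j) (fun j => X (j + 2) j).
Proof.
move=> XW; apply/matrixP => i j; rewrite mxE.
have := XW i j.
case: i => [[|[|[|[|[|?]]]]] ?] //; case: j => [[|[|[|[|[|?]]]]] ?] //.
all: rewrite /W_zero /=.
all: try (move=> h; by apply: h).
all: by move=> _; congr (X _ _); apply: val_inj.
Qed.

Lemma B0_Wmx (y : 'I_5 -> R) : B0 y = Wmx (fun=> 1) (fun j => y j + 1) y.
Proof.
have [g gE] := ord_fun_nat y.
apply/matrixP => i j; rewrite !mxE !gE.
case: i => [[|[|[|[|[|?]]]]] ?] //; case: j => [[|[|[|[|[|?]]]]] ?] //=.
all: by eval_ord_args g.
Qed.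

Lemma diag_Wmx_diag (d z c0 c1 c2 : 'I_5 -> R) :
  diagv d *m Wmx c0 c1 c2 *m diagv z =
  Wmx (fun j => d j * c0 j * z j) (fun j => d (j + 1) * c1 j * z j)
      (fun j => d (j + 2) * c2 j * z j).
Proof.
apply/matrixP => i j; rewrite /diagv mul_mx_diag mul_diag_mx !mxE.
by do 3 (case: ifP => [/eqP-> //|_]); rewrite mulr0 mul0r.
Qed.

Lemma horn_paramE (d y z : 'I_5 -> R) :
  horn_param d y z =
  Wmx (fun j => d j * z j) (fun j => d (j + 1) * (y j + 1) * z j)
      (fun j => d (j + 2) * y j * z j).
Proof. by rewrite /horn_param B0_Wmx diag_Wmx_diag; apply: eq_Wmx => j /=; rewrite ?mulr1. Qed.

Lemma horn_col_if (b : 'I_5 -> bool) (u c0 c1 c2 d0 d1 d2 : 'I_5 -> R) j :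
  horn_col u (fun i => if b i then c0 i else d0 i) (fun i => if b i then c1 i else d1 i)
    (fun i => if b i then c2 i else d2 i) j =
  if b j then horn_col u c0 c1 c2 j else horn_col u d0 d1 d2 j.
Proof. by rewrite /horn_col; case: (b j). Qed.

End WMatrices.

Lemma map_Wmx {R S : nzRingType} (f : R -> S) (c0 c1 c2 : 'I_5 -> R) : f 0 = 0 ->
  map_mx f (Wmx c0 c1 c2) = Wmx (f \o c0) (f \o c1) (f \o c2).
Proof.
by move=> f0; apply/matrixP => i j; rewrite !mxE; do 3 (case: ifP => _ //).
Qed.

Definition wnorm {R : nzRingType} (u : 'I_5 -> R) (j : 'I_5) : R :=
  u j ^+ 2 + u (j + 1) ^+ 2 + u (j + 2) ^+ 2.

(* [(cross0, cross1, cross2) u a0 a1 a2 j] is the cross product of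
   [(u j, - u (j + 1), u (j + 2))] with [(a0 j, a1 j, a2 j)]. *)
Definition cross0 {R : nzRingType} (u a0 a1 a2 : 'I_5 -> R) (j : 'I_5) : R :=
  - u (j + 1) * a2 j - u (j + 2) * a1 j.
Definition cross1 {R : nzRingType} (u a0 a1 a2 : 'I_5 -> R) (j : 'I_5) : R :=
  u (j + 2) * a0 j - u j * a2 j.
Definition cross2 {R : nzRingType} (u a0 a1 a2 : 'I_5 -> R) (j : 'I_5) : R :=
  u j * a1 j + u (j + 1) * a0 j.

Definition s_Horn_mpoly {R : comNzRingType} : {mpoly R[5 * 5]} :=
  \det (\matrix_(i, j) ((Horn i j : R)%:MP * 'X_(mxvec_index i j))).

Definition polynomial_on_curves {R : comNzRingType} (F : 'M[R]_5 -> R) :=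
  forall P : 'M[{poly R}]_5,
    exists Q : {poly R}, forall t, F (map_mx (horner^~ t) P) = Q.[t].

Section CommRing.
Variable R : comNzRingType.

Lemma horn_col_Wmx (v : 'rV[R]_5) (c0 c1 c2 : 'I_5 -> R) j :
  (v *m hadamard Horn (Wmx c0 c1 c2)) 0 j = horn_col (v 0) c0 c1 c2 j.
Proof.
have [g gE] := ord_fun_nat (v 0).
rewrite mxE !big_ord_recr big_ord0 /= /hadamard !mxE /horn_col !gE.
case: j => [[|[|[|[|[|?]]]]] ?] //=.
all: by eval_ord_args g; ring.
Qed.

Lemma horn_col_cross (u a0 a1 a2 : 'I_5 -> R) j :
  horn_col u (cross0 u a0 a1 a2) (cross1 u a0 a1 a2) (cross2 u a0 a1 a2) j = 0.
Proof. by rewrite /horn_col /cross0 /cross1 /cross2; ring. Qed.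

Lemma horn_col_line (u e c0 c1 c2 : 'I_5 -> R) t j :
  horn_col (fun i => u i + e i * t) c0 c1 c2 j =
  horn_col u c0 c1 c2 j + horn_col e c0 c1 c2 j * t.
Proof. by rewrite /horn_col; ring. Qed.

Lemma mx_eval_s_Horn_mpoly (Y : 'M[R]_5) : mx_eval s_Horn_mpoly Y = s_Horn Y.
Proof.
rewrite /mx_eval /s_Horn_mpoly -det_map_mx /s_Horn; congr (\det _).
apply/matrixP => i j.
by rewrite !mxE rmorphM /= mevalC mevalXU mxvecE.
Qed.

Lemma meval_horner n (p : {mpoly R[n]}) (V : 'I_n -> {poly R}) :
  exists Q : {poly R}, forall t, p.@[fun k => (V k).[t]] = Q.[t].
Proof.
exists (\sum_(m <- msupp p) p@_m *: \prod_i V i ^+ m i) => t.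
rewrite mevalE horner_sum; apply: eq_bigr => m _.
rewrite hornerZ horner_prod; congr (_ * _); apply: eq_bigr => i _.
by rewrite horner_exp.
Qed.

Lemma mx_eval_on_curves (p : {mpoly R[5 * 5]}) : polynomial_on_curves (mx_eval p).
Proof.
move=> P; have [Q QE] := meval_horner p (fun k => mxvec P 0 k).
by exists Q => t; rewrite -QE; apply: meval_eq => k; rewrite -map_mxvec mxE.
Qed.

End CommRing.

(* Since [w × (w × c) = (w·c) w - |w|^2 c], a column [c] orthogonal to [w] is
   [w × a] for [a = - (w × c) / |w|^2]. *)
Definition coord0 {R : fieldType} (u c0 c1 c2 : 'I_5 -> R) (j : 'I_5) : R :=
  - cross0 u c0 c1 c2 j / wnorm u j.
Definition coord1 {R : fieldType} (u c0 c1 c2 : 'I_5 -> R) (j : 'I_5) : R :=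
  - cross1 u c0 c1 c2 j / wnorm u j.
Definition coord2 {R : fieldType} (u c0 c1 c2 : 'I_5 -> R) (j : 'I_5) : R :=
  - cross2 u c0 c1 c2 j / wnorm u j.

Section Field.
Variable R : fieldType.

Lemma s_Horn_Wmx_eq0P (c0 c1 c2 : 'I_5 -> R) :
  s_Horn (Wmx c0 c1 c2) = 0 <->
  exists2 u : 'I_5 -> R, (exists k, u k != 0) & forall j, horn_col u c0 c1 c2 j = 0.
Proof.
rewrite /s_Horn; split => [/eqP/det0P [v v_neq0 vX] | [u [k uk] uX]].
  exists (v 0); last by move=> j; rewrite -horn_col_Wmx vX mxE.
  apply/existsP; apply: contraR v_neq0; rewrite negb_exists => /forallP v0.
  by apply/eqP/rowP => k; rewrite mxE; apply/eqP/negbNE/v0.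
apply/eqP/det0P; exists (\row_i u i).
  by apply: contraNneq uk => /rowP/(_ k)/eqP; rewrite !mxE.
by apply/rowP => j; rewrite horn_col_Wmx mxE -(uX j) /horn_col !mxE.
Qed.

Lemma s_Horn_param (d y z : 'I_5 -> R) : (forall i, d i != 0) ->
  s_Horn (horn_param d y z) = 0.
Proof.
move=> d_neq0; rewrite horn_paramE; apply/s_Horn_Wmx_eq0P.
exists (fun i => (d i)^-1); first by exists 0; rewrite invr_eq0.
move=> j; rewrite /horn_col; field.
by rewrite !d_neq0.
Qed.

(* The left kernel vector of [H o horn_param d y z] is [d^-1]. *)
Lemma Wmx_horn_param (u c0 c1 c2 : 'I_5 -> R) :
  (forall j, u j != 0) -> (forall j, c0 j != 0) -> (forall j, horn_col u c0 c1 c2 j = 0) ->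
  Wmx c0 c1 c2 = horn_param (fun j => (u j)^-1)
    (fun j => u (j + 2) * c2 j / (u j * c0 j)) (fun j => u j * c0 j).
Proof.
move=> u_neq0 c0_neq0 uc; rewrite horn_paramE; apply: eq_Wmx => j /=.
- by rewrite mulKf.
- have : horn_col u c0 c1 c2 j == 0 by rewrite uc.
  rewrite /horn_col addrAC subr_eq0 => /eqP c1E.
  by rewrite -mulrA mulrDl mul1r divfK ?mulf_neq0 // [_ + _ * c0 j]addrC c1E mulKf.
- by rewrite -mulrA divfK ?mulf_neq0 // mulKf.
Qed.

Lemma cross_coordE (u c0 c1 c2 : 'I_5 -> R) j :
  wnorm u j != 0 -> horn_col u c0 c1 c2 j = 0 ->
  let a0 := coord0 u c0 c1 c2 in let a1 := coord1 u c0 c1 c2 in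
  let a2 := coord2 u c0 c1 c2 in
  [/\ cross0 u a0 a1 a2 j = c0 j, cross1 u a0 a1 a2 j = c1 j
    & cross2 u a0 a1 a2 j = c2 j].
Proof.
move=> N_neq0 uc /=.
have N_neq0' : u j ^+ 2 + u (j + 1) ^+ 2 + u (j + 2) ^+ 2 != 0 by [].
rewrite /cross0 /cross1 /cross2 /coord0 /coord1 /coord2 /cross0 /cross1 /cross2; split.
- by rewrite -[RHS]subr0 -(mul0r (u j / wnorm u j)) -uc /horn_col /wnorm; field.
- by rewrite -[RHS]addr0 -(mul0r (u (j + 1) / wnorm u j)) -uc /horn_col /wnorm; field.
- by rewrite -[RHS]subr0 -(mul0r (u (j + 2) / wnorm u j)) -uc /horn_col /wnorm; field.
Qed.

Lemma Wmx_cross (u c0 c1 c2 : 'I_5 -> R) :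
  (forall j, wnorm u j != 0) -> (forall j, horn_col u c0 c1 c2 j = 0) ->
  let a0 := coord0 u c0 c1 c2 in let a1 := coord1 u c0 c1 c2 in
  let a2 := coord2 u c0 c1 c2 in
  Wmx c0 c1 c2 = Wmx (cross0 u a0 a1 a2) (cross1 u a0 a1 a2) (cross2 u a0 a1 a2).
Proof.
by move=> u_reg uc /=; apply: eq_Wmx => j; have [] := cross_coordE (u_reg j) (uc j).
Qed.

End Field.

Definition norm1 {R : numDomainType} (f : 'I_5 -> R) : R := \sum_k `|f k|.

Lemma wnorm_eq0 (R : realDomainType) (u : 'I_5 -> R) j :
  (wnorm u j == 0) = [&& u j == 0, u (j + 1) == 0 & u (j + 2) == 0].
Proof. by rewrite /wnorm !paddr_eq0 ?addr_ge0 ?sqr_ge0 // !sqrf_eq0 andbA. Qed.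

Lemma norm1_ge0 (R : numDomainType) (f : 'I_5 -> R) : 0 <= norm1 f.
Proof. by apply: sumr_ge0 => k _; apply: normr_ge0. Qed.

Lemma large_addr_gt0 (R : realDomainType) (f : 'I_5 -> R) i t :
  norm1 f < t -> 0 < f i + t.
Proof.
have : `|f i| <= norm1 f by rewrite /norm1 (bigD1 i) //= lerDl sumr_ge0.
by have := ler_norm (- f i); rewrite normrN; lra.
Qed.

Lemma large_line_neq0 (R : realFieldType) (u e : 'I_5 -> R) k t :
  norm1 (fun i => u i / e i) < t -> (u k != 0) || (e k != 0) -> u k + e k * t != 0.
Proof.
have [-> _|ek Nt _] := eqVneq (e k) 0; first by rewrite orbF mul0r addr0.
rewrite -[u k](divfK ek) [e k * t]mulrC -mulrDl mulf_neq0 //.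
by rewrite gt_eqF // (large_addr_gt0 (f := fun i => u i / e i)).
Qed.

Lemma poly_eq0_large (R : numDomainType) (Q : {poly R}) T :
  (forall t, T < t -> Q.[t] = 0) -> Q = 0.
Proof.
move=> QT; apply/eqP; apply: contraT => Q_neq0.
pose rs := [seq T + i.+1%:R | i <- iota 0 (size Q)].
have := max_poly_roots Q_neq0 (rs := rs).
rewrite size_map size_iota ltnn; apply.
  by apply/allP => _ /mapP [i _ ->]; apply/rootP/QT; rewrite ltrDl ltr0Sn.
rewrite map_inj_uniq ?iota_uniq // => i j /addrI /eqP.
by rewrite eqr_nat eqSS => /eqP.
Qed.

Section ZariskiClosure.
Variable R : realType.
Variable F : 'M[R]_5 -> R.
Hypothesis F_curves : polynomial_on_curves F.
Hypothesis F_ZHorn : forall Y, Z_Horn Y -> F Y = 0.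

Lemma vanish_on_Wmx_curve (C0 C1 C2 : 'I_5 -> {poly R}) (c0 c1 c2 : 'I_5 -> R) T :
  (forall j, [/\ (C0 j).[0] = c0 j, (C1 j).[0] = c1 j & (C2 j).[0] = c2 j]) ->
  (forall t, T < t ->
     F (Wmx (fun j => (C0 j).[t]) (fun j => (C1 j).[t]) (fun j => (C2 j).[t])) = 0) ->
  F (Wmx c0 c1 c2) = 0.
Proof.
move=> C_at0 C_large.
have curveE t : map_mx (horner^~ t) (Wmx C0 C1 C2) =
    Wmx (fun j => (C0 j).[t]) (fun j => (C1 j).[t]) (fun j => (C2 j).[t]).
  by rewrite map_Wmx ?horner0.
have -> : Wmx c0 c1 c2 = map_mx (horner^~ 0) (Wmx C0 C1 C2).
  by rewrite curveE; apply: eq_Wmx => j; have [] := C_at0 j.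
have [Q QE] := F_curves (Wmx C0 C1 C2).
rewrite QE (@poly_eq0_large _ Q T) ?horner0 // => t Tt.
by rewrite -QE curveE C_large.
Qed.

Lemma vanish_horn_param (d y z : 'I_5 -> R) : F (horn_param d y z) = 0.
Proof.
pose sh (f : 'I_5 -> R) i := (f i)%:P + 'X.
rewrite horn_paramE.
apply: (vanish_on_Wmx_curve (C0 := fun j => sh d j * sh z j)
  (C1 := fun j => sh d (j + 1) * (sh y j + 1) * sh z j)
  (C2 := fun j => sh d (j + 2) * sh y j * sh z j)
  (T := norm1 d + norm1 y + norm1 z)) => [j|t Tt].
  by split; rewrite /sh !hornerE.
have [dt yt zt] : [/\ norm1 d < t, norm1 y < t & norm1 z < t].
  by have := norm1_ge0 d; have := norm1_ge0 y; have := norm1_ge0 z; split; lra.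
rewrite (_ : Wmx _ _ _ =
    horn_param (fun i => d i + t) (fun i => y i + t) (fun i => z i + t)).
  apply: F_ZHorn; exists (fun i => d i + t), (fun i => y i + t), (fun i => z i + t).
  by split=> // i; apply: large_addr_gt0.
by rewrite horn_paramE; apply: eq_Wmx => j; rewrite /sh !hornerE.
Qed.

Lemma vanish_cross (u a0 a1 a2 : 'I_5 -> R) :
  F (Wmx (cross0 u a0 a1 a2) (cross1 u a0 a1 a2) (cross2 u a0 a1 a2)) = 0.
Proof.
pose sh (f : 'I_5 -> R) i := (f i)%:P + 'X.
pose sht (f : 'I_5 -> R) t i := f i + t.
apply: (vanish_on_Wmx_curve (C0 := cross0 (sh u) (sh a0) (sh a1) (sh a2))
  (C1 := cross1 (sh u) (sh a0) (sh a1) (sh a2))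
  (C2 := cross2 (sh u) (sh a0) (sh a1) (sh a2))
  (T := norm1 u + norm1 a1 + norm1 a2)) => [j|t Tt].
  by split; rewrite /cross0 /cross1 /cross2 /sh !hornerE.
have [ut a1t a2t] : [/\ norm1 u < t, norm1 a1 < t & norm1 a2 < t].
  by have := norm1_ge0 u; have := norm1_ge0 a1; have := norm1_ge0 a2; split; lra.
rewrite (_ : Wmx _ _ _ = Wmx (cross0 (sht u t) (sht a0 t) (sht a1 t) (sht a2 t))
    (cross1 (sht u t) (sht a0 t) (sht a1 t) (sht a2 t))
    (cross2 (sht u t) (sht a0 t) (sht a1 t) (sht a2 t))); last first.
  by apply: eq_Wmx => j; rewrite /cross0 /cross1 /cross2 /sh /sht !hornerE.
rewrite (Wmx_horn_param (u := sht u t)) ?vanish_horn_param // => j.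
- by rewrite gt_eqF // large_addr_gt0.
- rewrite lt_eqF // /cross0 /sht.
  have := mulr_gt0 (large_addr_gt0 (j + 1) ut) (large_addr_gt0 j a2t).
  have := mulr_gt0 (large_addr_gt0 (j + 2) ut) (large_addr_gt0 j a1t).
  lra.
- exact: horn_col_cross.
Qed.

Lemma vanish_regular_kernel (u c0 c1 c2 : 'I_5 -> R) :
  (forall j, wnorm u j != 0) -> (forall j, horn_col u c0 c1 c2 j = 0) ->
  F (Wmx c0 c1 c2) = 0.
Proof. by move=> u_reg uc; rewrite (Wmx_cross u_reg uc) vanish_cross. Qed.

Lemma vanish_kernel_curve (u e c0 c1 c2 : 'I_5 -> R) :
  (forall j, horn_col u c0 c1 c2 j = 0) ->
  (forall j, wnorm u j = 0 -> wnorm e j != 0 /\ horn_col e c0 c1 c2 j = 0) ->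
  F (Wmx c0 c1 c2) = 0.
Proof.
move=> uc u_sing.
(* Columns that [u] constrains follow [u + t e] as cross products with fixed
   coordinates; the others stay fixed and are orthogonal to [e]. *)
pose a0 := coord0 u c0 c1 c2; pose a1 := coord1 u c0 c1 c2; pose a2 := coord2 u c0 c1 c2.
pose uP i := (u i)%:P + (e i)%:P * 'X.
pose aP (a : 'I_5 -> R) i := (a i)%:P.
pose ut t i := u i + e i * t.
apply: (vanish_on_Wmx_curve
  (C0 := fun i => if wnorm u i != 0 then cross0 uP (aP a0) (aP a1) (aP a2) i else (c0 i)%:P)
  (C1 := fun i => if wnorm u i != 0 then cross1 uP (aP a0) (aP a1) (aP a2) i else (c1 i)%:P)
  (C2 := fun i => if wnorm u i != 0 then cross2 uP (aP a0) (aP a1) (aP a2) i else (c2 i)%:P)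
  (T := norm1 (fun i => u i / e i))) => [j|t Tt].
  have [uj|_] := boolP (wnorm u j != 0); last by rewrite !hornerC.
  have [<- <- <-] := cross_coordE uj (uc j).
  by split; rewrite /cross0 /cross1 /cross2 /uP /aP !hornerE ?mulr0 ?addr0.
rewrite (_ : Wmx _ _ _ = Wmx
    (fun i => if wnorm u i != 0 then cross0 (ut t) a0 a1 a2 i else c0 i)
    (fun i => if wnorm u i != 0 then cross1 (ut t) a0 a1 a2 i else c1 i)
    (fun i => if wnorm u i != 0 then cross2 (ut t) a0 a1 a2 i else c2 i)); last first.
  by apply: eq_Wmx => i; case: (wnorm u i != 0);
    rewrite /cross0 /cross1 /cross2 /uP /aP /ut !hornerE.
apply: (vanish_regular_kernel (u := ut t)) => j; last first.
  rewrite horn_col_if; case: ifP => [_|/negbFE/eqP uj]; first exact: horn_col_cross.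
  by rewrite /ut horn_col_line uc (u_sing j uj).2 mul0r addr0.
have ut_eq0 k : ut t k = 0 -> (u k == 0) && (e k == 0).
  by move=> /eqP; apply: contraTT; rewrite negb_and; apply: large_line_neq0.
apply/negP; rewrite wnorm_eq0 => /and3P [/eqP/ut_eq0/andP [u0 e0]
  /eqP/ut_eq0/andP [u1 e1] /eqP/ut_eq0/andP [u2 e2]].
have uj : wnorm u j = 0 by apply/eqP; rewrite wnorm_eq0 u0 u1 u2.
by have [] := u_sing j uj; rewrite wnorm_eq0 e0 e1 e2.
Qed.

Lemma vanish_singular_kernel_nondeg (u c0 c1 c2 : 'I_5 -> R) j :
  u j = 0 -> u (j + 1) = 0 -> u (j + 2) = 0 -> u (j + 4) != 0 ->
  c0 j != 0 -> (u (j + 3) = 0 -> c2 (j + 1) != 0) ->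
  (forall i, horn_col u c0 c1 c2 i = 0) -> F (Wmx c0 c1 c2) = 0.
Proof.
move=> u0 u1 u2 u4 c0j c2j uc.
(* [u] does not constrain column [j], nor column [j + 1] when [u (j + 3) = 0];
   [e] is orthogonal to these columns and nonzero on their windows. *)
pose b := if u (j + 3) == 0 then - c0 (j + 1) / c2 (j + 1) else 0.
pose e (i : 'I_5) := nth 0 [:: c1 j / c0 j; 1; 0; b; 0] (i - j)%R.
have eE (k : 'I_5) : e (j + k) = nth 0 [:: c1 j / c0 j; 1; 0; b; 0] k.
  by rewrite /e (addrC j) addrK.
have [e0 e1 e2 e3] : [/\ e j = c1 j / c0 j, e (j + 1) = 1, e (j + 2) = 0 & e (j + 3) = b].
  by rewrite -{1}[j]addr0 !eE.
have ej_reg : wnorm e j != 0 by rewrite wnorm_eq0 e1 oner_eq0 /= andbF.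
have ej1_reg : wnorm e (j + 1) != 0 by rewrite wnorm_eq0 e1 oner_eq0.
apply: (vanish_kernel_curve (e := e) uc) => i; case: (offsetP j i).
- move=> _; split=> //.
  by rewrite /horn_col e0 e1 e2 mul0r addr0 mul1r divfK // subrr.
- move/eqP; rewrite wnorm_eq0 -!addrA !I5_addE => /and3P [_ _ /eqP u3].
  split=> //.
  rewrite /horn_col -!addrA !I5_addE e1 e2 e3 /b u3 eqxx.
  by rewrite mul1r mul0r oppr0 add0r (divfK (c2j u3)) addrN.
- by move/eqP; rewrite wnorm_eq0 -!addrA !I5_addE (negbTE u4) !andbF.
- by move/eqP; rewrite wnorm_eq0 -!addrA !I5_addE (negbTE u4) !andbF.
- by move/eqP; rewrite wnorm_eq0 (negbTE u4).
Qed.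

Lemma vanish_singular_kernel (u c0 c1 c2 : 'I_5 -> R) j :
  u j = 0 -> u (j + 1) = 0 -> u (j + 2) = 0 -> u (j + 4) != 0 ->
  (forall i, horn_col u c0 c1 c2 i = 0) -> F (Wmx c0 c1 c2) = 0.
Proof.
move=> u0 u1 u2 u4 uc.
(* Moving [c0 j], and [c2 (j + 1)] when [u (j + 3) = 0], keeps [u] a kernel vector. *)
apply: (vanish_on_Wmx_curve (C0 := fun i => (c0 i)%:P + (if i == j then 'X else 0))
  (C1 := fun i => (c1 i)%:P)
  (C2 := fun i => (c2 i)%:P + (if (u (j + 3) == 0) && (i == j + 1) then 'X else 0))
  (T := norm1 c0 + norm1 c2)) => [i|t Tt].
  by split; rewrite ?hornerD hornerC //; case: ifP; rewrite ?hornerX ?horner0 addr0.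
have [c0t c2t] : norm1 c0 < t /\ norm1 c2 < t.
  by have := norm1_ge0 c0; have := norm1_ge0 c2; split; lra.
rewrite (_ : Wmx _ _ _ = Wmx (fun i => c0 i + (if i == j then t else 0)) c1
    (fun i => c2 i + (if (u (j + 3) == 0) && (i == j + 1) then t else 0))); last first.
  by apply: eq_Wmx => i; rewrite ?hornerD hornerC //; case: ifP; rewrite ?hornerX ?horner0.
apply: (vanish_singular_kernel_nondeg (j := j) u0 u1 u2 u4) => /=.
- by rewrite eqxx gt_eqF // large_addr_gt0.
- by move=> u3; rewrite u3 !eqxx /= gt_eqF // large_addr_gt0.
move=> i; rewrite /horn_col.
have -> : u i * (c0 i + (if i == j then t else 0)) = u i * c0 i.
  by case: eqP => [->|_]; rewrite ?u0 ?mul0r ?addr0.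
have -> : u (i + 2) * (c2 i + (if (u (j + 3) == 0) && (i == j + 1) then t else 0)) =
    u (i + 2) * c2 i.
  case: ifP => [|_]; last by rewrite addr0.
  by case/andP => /eqP u3 /eqP ->; rewrite -addrA I5_addE u3 !mul0r.
exact: uc.
Qed.

Lemma vanish_kernel (u c0 c1 c2 : 'I_5 -> R) :
  (exists k, u k != 0) -> (forall j, horn_col u c0 c1 c2 j = 0) ->
  F (Wmx c0 c1 c2) = 0.
Proof.
move=> [k uk] uc.
have [u_reg|] := boolP [forall i, wnorm u i != 0].
  by apply: (vanish_regular_kernel (u := u)) uc => i; apply: (forallP u_reg).
rewrite negb_forall => /existsP [j]; rewrite negbK wnorm_eq0.
move=> /and3P [/eqP u0 /eqP u1 /eqP u2].
have [u4|/negbNE/eqP u4] := boolP (u (j + 4) != 0).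
  exact: (vanish_singular_kernel u0 u1 u2 u4 uc).
have [u3|/negbNE/eqP u3] := boolP (u (j + 3) != 0).
  have [e1 e2 e4] : [/\ j + 4 + 1 = j, j + 4 + 2 = j + 1 & j + 4 + 4 = j + 3].
    by split; rewrite -addrA I5_addE ?addr0.
  by apply: (vanish_singular_kernel (j := j + 4)) uc; rewrite ?e1 ?e2 ?e4.
by case: (offsetP j k) uk; rewrite ?u0 ?u1 ?u2 ?u3 ?u4 eqxx.
Qed.

End ZariskiClosure.

Theorem theorem2p7 (R : realType) (X : 'M[R]_5) :
  zariski_closure_in_W (@Z_Horn R) X <-> (inW X /\ s_Horn X = 0).
Proof.
split=> [[XW Xclos] | [XW sX0]].
  split=> //; rewrite -mx_eval_s_Horn_mpoly; apply: Xclos => _ [d [y [z [d_gt0 _ _ ->]]]].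
  by rewrite mx_eval_s_Horn_mpoly s_Horn_param // => i; rewrite gt_eqF.
split=> // p p_ZHorn.
rewrite (inW_WmxE XW) in sX0 *.
have [u u_neq0 uX] := (s_Horn_Wmx_eq0P _ _ _).1 sX0.
exact: (vanish_kernel (mx_eval_on_curves p) p_ZHorn u_neq0 uX).
Qed.
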